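(* For all $0\le\varepsilon\le x\le1$ with $x>0$, $\Delta(\varepsilon)\le \frac{\Delta(x)}{x}\,\varepsilon$. In particular $\Delta(\varepsilon)\le\varepsilon$ for all $0\le\varepsilon\le1$.
   Context: Let $\lambda$ denote Lebesgue measure on $\mathbb{R}$. A set $C\subseteq\mathbb{R}$ is symmetric if there is a number $c$ such that $c+x\in C$ if and only if $c-x\in C$. For a measurable $A\subseteq\mathbb{R}$ let $D(A):=\sup\{\lambda(C): C\subseteq A,\ C \text{ measurable and symmetric}\}$. For $0\le\varepsilon\le1$ let $\Delta(\varepsilon):=\inf\{D(A): A\subseteq[0,1) \text{ measurable},\ \lambda(A)=\varepsilon\}$. *)

From mathcomp Require Import all_boot all_order all_algebra.
From mathcomp Require Import all_classical all_reals all_analysis.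
Set Implicit Arguments. Unset Strict Implicit. Unset Printing Implicit Defensive.
Import Order.TTheory GRing.Theory Num.Theory.
Local Open Scope classical_set_scope.
Local Open Scope ring_scope.

(* The real line equipped with the sigma-algebra of Lebesgue-measurable
   (Caratheodory-measurable) sets, i.e. the domain of the completed
   Lebesgue measure. *)
Definition lebT (R : realType) : Type :=
  caratheodory_type (R := R) (wlength (@idfun R))^*%mu.

Definition leb {R : realType} : set (lebT R) -> \bar R :=
  @completed_lebesgue_measure R.

Definition symmetric_set {R : realType} (C : set R) : Prop :=
  exists c : R, forall x : R, C (c + x) <-> C (c - x).

Definition Dsym {R : realType} (A : set (lebT R)) : \bar R :=
  ereal_sup [set leb C | C in [set C : set (lebT R) |
     C `<=` A /\ measurable C /\ symmetric_set (C : set R)]].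

Definition Delta {R : realType} (eps : R) : \bar R :=
  ereal_inf [set Dsym A | A in [set A : set (lebT R) |
     A `<=` `[0, 1[%classic /\ measurable A /\ leb A = eps%:E]].

(* Dilating a set by a factor t > 0 multiplies Lebesgue (outer) measure by t,
   preserves measurability and symmetry, and maps symmetric subsets of A onto
   symmetric subsets of the dilate, so D(tA) <= t D(A).  For t = eps/x <= 1 the
   dilate of an admissible set of measure x is an admissible set of measure eps,
   whence Delta(eps) <= (eps/x) Delta(x).  The bound Delta(eps) <= eps holds
   because D(A) <= lambda(A), witnessed by A = [0, eps). *)

From mathcomp Require Import all_boot all_order all_algebra.
From mathcomp Require Import all_classical all_reals all_analysis.
Import Order.TTheory GRing.Theory Num.Theory.
Local Open Scope classical_set_scope.
Local Open Scope ring_scope.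
Local Open Scope ereal_scope.

Section dilation.
Variable R : realType.
Implicit Types (t a b eps x : R) (A C : set R).

Notation mu := (@wlength R idfun).

Definition dilate t A : set R := [set y | A (y / t)%R].

Lemma dilateK t A : (t != 0)%R -> dilate t^-1 (dilate t A) = A.
Proof. by move=> t0; apply/seteqP; split => z; rewrite /dilate /= invrK mulfK. Qed.

Lemma dilateVK t A : (t != 0)%R -> dilate t (dilate t^-1 A) = A.
Proof. by move=> t0; apply/seteqP; split => z; rewrite /dilate /= invrK mulfVK. Qed.

Lemma dilate_itv_oc t a b : (0 < t)%R ->
  dilate t `]a, b]%classic = `](t * a)%R, (t * b)%R]%classic.
Proof.
move=> t0; apply/seteqP; split => z; rewrite /dilate /= !in_itv /=;
  by rewrite ltr_pdivlMr // ler_pdivrMr // ![(_ * t)%R]mulrC.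
Qed.

Lemma wlength_dilate_itv_oc t a b : (0 < t)%R ->
  mu (dilate t `]a, b]%classic) = t%:E * mu `]a, b]%classic.
Proof.
move=> t0; rewrite dilate_itv_oc //; have [ab|ba] := leP a b.
  by rewrite !wlength_itv_bnd ?ler_pM2l //= -EFinM mulrBr.
by rewrite !set_itv_ge ?wlength0 ?mule0 //= -leNgt bnd_simp ?ler_pM2l ?ltW.
Qed.

Lemma measurable_dilate_ocitv t (F : set (ocitv_type R)) : (0 < t)%R ->
  measurable F -> measurable (dilate t F : set (ocitv_type R)).
Proof. by move=> t0 [[a b] _ <-]; exists (t * a, t * b)%R; rewrite //= dilate_itv_oc. Qed.

Lemma mu_ext_dilate_le t A : (0 < t)%R ->
  (mu^*)%mu (dilate t A) <= t%:E * (mu^*)%mu A.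
Proof.
move=> t0; rewrite /mu_ext -lee_pdivrMl//.
apply: le_ereal_inf_tmp => _ [F [mF AF] <-]; rewrite lee_pdivrMl//.
apply: ereal_inf_lbound; exists (fun k => dilate t (F k)).
  split; first by move=> k; exact: measurable_dilate_ocitv.
  by move=> z /AF [k _ Fk]; exists k.
rewrite /= -nneseriesZl; last by move=> i _; exact: wlength_ge0.
by apply: eq_eseriesr => k _; case: (mF k) => -[a b] _ <-; rewrite wlength_dilate_itv_oc.
Qed.

Lemma mu_ext_dilate t A : (0 < t)%R ->
  (mu^*)%mu (dilate t A) = t%:E * (mu^*)%mu A.
Proof.
move=> t0; apply/eqP; rewrite eq_le mu_ext_dilate_le //= -lee_pdivlMl //.
have := @mu_ext_dilate_le t^-1 (dilate t A).
by rewrite invr_gt0 dilateK ?lt0r_neq0 // => /(_ t0).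
Qed.

Lemma leb_dilate t (A : set (lebT R)) : (0 < t)%R ->
  leb (dilate t A : set (lebT R)) = t%:E * leb A.
Proof. exact: mu_ext_dilate. Qed.

Lemma measurable_dilate t (A : set (lebT R)) : (0 < t)%R ->
  measurable A -> measurable (dilate t A : set (lebT R)).
Proof.
move=> t0 mA; apply: le_caratheodory_measurable => X.
rewrite -[X](dilateVK t X (lt0r_neq0 t0)); move: (dilate t^-1 X) => Y.
change ((mu^*)%mu (dilate t (Y `&` A)) + (mu^*)%mu (dilate t (Y `&` ~` A))
  <= (mu^*)%mu (dilate t Y)).
by rewrite !mu_ext_dilate // -ge0_muleDr ?mu_ext_ge0 // -(mA Y).
Qed.

Lemma symmetric_dilate t C :
  (t != 0)%R -> symmetric_set C -> symmetric_set (dilate t C).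
Proof.
by move=> t0 [c Cc]; exists (c * t)%R => x; rewrite /dilate /= mulrDl mulrBl mulfK.
Qed.

Lemma Dsym_dilate t (A : set (lebT R)) : (0 < t)%R ->
  Dsym (dilate t A : set (lebT R)) <= t%:E * Dsym A.
Proof.
move=> t0; apply: ge_ereal_sup => _ [C [CtA [mC sC]] <-].
rewrite -(dilateVK t C (lt0r_neq0 t0)) leb_dilate //.
apply: lee_wpmul2l; first by rewrite lee_fin ltW.
apply: ereal_sup_ubound; exists (dilate t^-1 C : set (lebT R)) => //; split.
  by move=> z /CtA; rewrite /dilate /= invrK mulfK ?lt0r_neq0.
split; first by apply: measurable_dilate; rewrite ?invr_gt0.
by apply: symmetric_dilate; rewrite // invr_eq0 lt0r_neq0.
Qed.

Lemma Dsym_le_leb (A : set (lebT R)) : Dsym A <= leb A.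
Proof. by apply: ge_ereal_sup => _ [C [CA _] <-]; exact: le_mu_ext. Qed.

Lemma dilate_sub_itv01 t A : (0 < t)%R -> (t <= 1)%R ->
  A `<=` `[0%R, 1%R[%classic -> dilate t A `<=` `[0%R, 1%R[%classic.
Proof.
move=> t0 t1 A01 z /A01; rewrite /= !in_itv /= ler_pdivlMr // mul0r => /andP[-> /=].
by rewrite ltr_pdivrMr // mul1r => /lt_le_trans; apply.
Qed.

Lemma Delta_le eps : (0 <= eps)%R -> (eps <= 1)%R -> Delta eps <= eps%:E.
Proof.
move=> eps0 eps1; set I := `[0%R, eps[%classic : set (lebT R).
have lebI : leb I = eps%:E.
  rewrite [LHS]lebesgue_measure_itv /= lte_fin.
  by case: ltgtP eps0 => // [eps_gt0|<-] _; rewrite ?oppr0 ?adde0 ?ltxx.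
apply: (@le_trans _ _ (Dsym I)); last by rewrite -lebI Dsym_le_leb.
apply: ereal_inf_lbound; exists I => //; split.
  by move=> z; rewrite /I /= !in_itv /= => /andP[-> /lt_le_trans]; apply.
by split; [apply: sub_caratheodory; exact: measurable_itv | exact: lebI].
Qed.

Lemma Delta_le_scaled eps x : (0 <= eps)%R -> (eps <= x)%R -> (0 < x)%R ->
  Delta eps <= Delta x * (eps / x)%:E.
Proof.
rewrite le_eqVlt => /predU1P[<- _ _|eps_gt0 epsx x0].
  by rewrite mul0r mule0 Delta_le.
set t := (eps / x)%R; have t0 : (0 < t)%R by rewrite divr_gt0.
rewrite muleC -lee_pdivrMl //.
apply: le_ereal_inf_tmp => _ [A [A01 [mA lebA]] <-]; rewrite lee_pdivrMl //.
apply: le_trans (Dsym_dilate _ _ t0); apply: ereal_inf_lbound.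
exists (dilate t A : set (lebT R)) => //; split.
  by apply: dilate_sub_itv01; rewrite // ler_pdivrMr // mul1r.
split; first exact: measurable_dilate.
by rewrite leb_dilate // lebA -EFinM divfK ?gt_eqF.
Qed.

End dilation.

Theorem lemma2p3 (R : realType) :
  (forall eps x : R, (0 <= eps)%R -> (eps <= x)%R -> (x <= 1)%R -> (0 < x)%R ->
     Delta eps <= Delta x * (eps / x)%:E) /\
  (forall eps : R, (0 <= eps)%R -> (eps <= 1)%R -> Delta eps <= eps%:E).
Proof.
split; last exact: Delta_le.
by move=> eps x eps0 epsx _ x0; exact: Delta_le_scaled.
Qed.
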